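(* Let $T$, $\mathcal{S}=\mathcal{S}_+\cup\mathcal{S}_-$, $\Psi$, $U$, $\lambda$ and $P_\lambda$ be as in the context. Consider the following three discrete-time QBDs on phase space $\mathcal{S}$: (i) the QBD with blocks $\Delta_{-1}=\frac12\begin{bmatrix}0&0\\0&I\end{bmatrix}$, $\Delta_0=\begin{bmatrix}0&P_{\lambda+-}\\0&\frac12P_{\lambda--}\end{bmatrix}$, $\Delta_1=\begin{bmatrix}P_{\lambda++}&0\\\frac12P_{\lambda-+}&0\end{bmatrix}$; (ii) the QBD with blocks $A'_{-1}=\frac12\begin{bmatrix}0&0\\0&I\end{bmatrix}$, $A'_0=\frac12\begin{bmatrix}I&P_{\lambda+-}\\0&P_{\lambda--}\end{bmatrix}$, $A'_1=\frac12\begin{bmatrix}P_{\lambda++}&0\\P_{\lambda-+}&0\end{bmatrix}$; (iii) the QBD with blocks $A_{-1}=\begin{bmatrix}0&0\\0&(I-\lambda^{-1}U)^{-1}\end{bmatrix}$, $A_0=\begin{bmatrix}0&P_{\lambda+-}\\0&0\end{bmatrix}$, $A_1=\begin{bmatrix}P_{\lambda++}&0\\0&0\end{bmatrix}$. Then the QBD in (ii) has the same $\mathcal{G}$-matrix as the QBD in (i) and the same $\mathcal{G}$-matrix as the QBD in (iii).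
   Context: $T$ is the generator of a continuous-time Markov chain on a finite set $\mathcal{S}=\mathcal{S}_+\cup\mathcal{S}_-$ (disjoint, both nonempty), partitioned into blocks $T_{++},T_{+-},T_{-+},T_{--}$ according to $\mathcal{S}_\pm$. $\Psi$ is the minimal nonnegative solution of $T_{+-}+\Psi T_{--}+T_{++}\Psi+\Psi T_{-+}\Psi=0$ (the first-return probability matrix of the unit-rate fluid queue with phase generator $T$, rates $+1$ on $\mathcal{S}_+$ and $-1$ on $\mathcal{S}_-$), and $U:=T_{--}+T_{-+}\Psi$. $\lambda>0$ satisfies $\lambda\ge\max_i|T_{ii}|$ and $P_\lambda:=I+\lambda^{-1}T$ with blocks $P_{\lambda++}$ etc. A discrete-time quasi-birth-death process (QBD) with transition blocks $L_{-1},L_0,L_1$ is a Markov chain $\{(Y_n,\kappa_n)\}$ on $\mathbb{Z}\times\mathcal{S}$ with $\mathbb{P}[Y_n=k+d,\kappa_n=j\mid Y_{n-1}=k,\kappa_{n-1}=i]=(L_d)_{ij}$ for $d\in\{-1,0,1\}$. Its $\mathcal{G}$-matrix has entries $\mathcal{G}_{ij}=\mathbb{P}[\theta<\infty,\kappa_\theta=j\mid Y_0=k,\kappa_0=i]$ with $\theta=\inf\{n>0:Y_n=k-1\}$. Matrices are partitioned into blocks according to $\mathcal{S}_+,\mathcal{S}_-$. *)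

From HB Require Import structures.
From mathcomp Require Import all_boot all_order all_algebra.
From mathcomp Require Import all_classical all_reals all_analysis.
Set Implicit Arguments. Unset Strict Implicit. Unset Printing Implicit Defensive.
Import Order.TTheory GRing.Theory Num.Theory numFieldNormedType.Exports.
Local Open Scope ring_scope.

(* Phase space S = S_+ (first p indices) u S_- (last q indices) = 'I_(p+q). *)

Definition is_generator (R : realType) (n : nat) (T : 'M[R]_n) : Prop :=
  (forall i j, i != j -> 0 <= T i j) /\ (forall i, \sum_j T i j = 0).

Definition mx_nonneg (R : realType) (m n : nat) (X : 'M[R]_(m, n)) : Prop :=
  forall i j, 0 <= X i j.

Definition riccati (R : realType) (p q : nat) (T : 'M[R]_(p + q))
  (X : 'M[R]_(p, q)) : Prop :=
  ursubmx T + X *m drsubmx T + ulsubmx T *m X + X *m dlsubmx T *m X = 0.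

Definition is_min_nonneg_riccati_sol (R : realType) (p q : nat)
  (T : 'M[R]_(p + q)) (Psi : 'M[R]_(p, q)) : Prop :=
  [/\ mx_nonneg Psi, riccati T Psi &
      forall X : 'M[R]_(p, q), mx_nonneg X -> riccati T X ->
        forall i j, Psi i j <= X i j].

(* Taboo probabilities of a discrete-time QBD with blocks Lm1, L0, L1
   (levels changing by -1, 0, +1), started at level k in some phase:
   (qbd_taboo n h) i j = P[Y_n = k-1+h, kappa_n = j, Y_m >= k for 1 <= m <= n
                           | Y_0 = k, kappa_0 = i]   for h >= 1;
   height 0 (level k-1) is taboo, so qbd_taboo n 0 = 0. *)
Fixpoint qbd_taboo (R : realType) (m : nat) (Lm1 L0 L1 : 'M[R]_m)
  (n h : nat) : 'M[R]_m :=
  match h with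
  | 0%N => 0
  | h'.+1 =>
    match n with
    | 0%N => if h' == 0%N then 1%:M else 0
    | n'.+1 =>
        qbd_taboo Lm1 L0 L1 n' h.+1 *m Lm1 + qbd_taboo Lm1 L0 L1 n' h *m L0
        + qbd_taboo Lm1 L0 L1 n' h' *m L1
    end
  end.

(* G-matrix: G i j = P[theta < oo, kappa_theta = j | Y_0 = k, kappa_0 = i],
   theta = inf{n > 0 : Y_n = k-1}; the event {theta = n+1, kappa_theta = j}
   has probability (qbd_taboo n 1 *m Lm1) i j. *)
Definition qbd_G (R : realType) (m : nat) (Lm1 L0 L1 : 'M[R]_m) : 'M[R]_m :=
  \matrix_(i, j) (limn (series (fun n : nat => ((qbd_taboo Lm1 L0 L1 n 1 *m Lm1) i j : R)))).

(* A QBD whose blocks are nonnegative with substochastic sum has as G-matrix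
   the minimal nonnegative solution of G = L_{-1} + L_0 G + L_1 G^2: the
   partial sums of the first-passage probabilities increase to G, and they stay
   below every nonnegative supersolution.

   In all three QBDs L_{-1} vanishes on the columns of S_+, so G = [0 a; 0 b].
   For (i) and (ii) the fixed-point equation reads W(a) b = I and
   a = P_{+-} b + P_{++} a b, where W(a) = I - lam^-1 (T_{--} + T_{-+} a); together
   these say that a solves the Riccati equation, hence Psi <= a. Conversely
   [0 Psi; 0 W(Psi)^-1] is a fixed point, so minimality gives a <= Psi and
   G = [0 Psi; 0 W(Psi)^-1] for both QBDs. The nonnegative inverse W(Psi)^-1 is
   itself obtained as the G-matrix of an auxiliary QBD on S_- (this needs
   Psi 1 <= 1, read off from the G-matrix of (i)). For (iii), whose L_{-1} is
   [0 0; 0 W(Psi)^-1], minimality gives a <= Psi, and then [0 a; 0 W(Psi)^-1]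
   is a supersolution for (i), so minimality for (i) gives Psi <= a. *)

From HB Require Import structures.
From mathcomp Require Import all_boot all_order all_algebra.
From mathcomp Require Import all_classical all_reals all_analysis.
From mathcomp Require Import zify lra.
Set Implicit Arguments. Unset Strict Implicit. Unset Printing Implicit Defensive.
Import Order.TTheory GRing.Theory Num.Theory numFieldNormedType.Exports.
Local Open Scope classical_set_scope.
Local Open Scope ring_scope.

(** * Entrywise order and entrywise limits of matrices *)

Section EntrywiseOrder.
Variable R : numDomainType.

Definition mxle m n (A B : 'M[R]_(m, n)) := forall i j, A i j <= B i j.

Lemma mxle_refl m n (A : 'M[R]_(m, n)) : mxle A A.
Proof. by move=> i j. Qed.

Lemma mxle_trans m n (A B C : 'M[R]_(m, n)) : mxle A B -> mxle B C -> mxle A C.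
Proof. by move=> AB BC i j; apply: le_trans (AB i j) (BC i j). Qed.

Lemma mxle_anti m n (A B : 'M[R]_(m, n)) : mxle A B -> mxle B A -> A = B.
Proof. by move=> AB BA; apply/matrixP => i j; apply/le_anti; rewrite AB BA. Qed.

Lemma mxleD m n (A A' B B' : 'M[R]_(m, n)) :
  mxle A A' -> mxle B B' -> mxle (A + B) (A' + B').
Proof. by move=> AA' BB' i j; rewrite !mxE lerD. Qed.

Lemma mxle_sum m n (I : finType) (P : pred I) (F G : I -> 'M[R]_(m, n)) :
  (forall i, mxle (F i) (G i)) -> mxle (\sum_(i | P i) F i) (\sum_(i | P i) G i).
Proof. by move=> FG i j; rewrite !summxE; apply: ler_sum => k _; apply: FG. Qed.

Lemma mxle_mull m n k (A : 'M[R]_(m, n)) (B B' : 'M[R]_(n, k)) :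
  mxle 0 A -> mxle B B' -> mxle (A *m B) (A *m B').
Proof.
move=> A0 BB' i j; rewrite !mxE; apply: ler_sum => l _.
by apply: ler_wpM2l; [have := A0 i l; rewrite mxE | apply: BB'].
Qed.

Lemma mxle_mulr m n k (A A' : 'M[R]_(m, n)) (B : 'M[R]_(n, k)) :
  mxle 0 B -> mxle A A' -> mxle (A *m B) (A' *m B).
Proof.
move=> B0 AA' i j; rewrite !mxE; apply: ler_sum => l _.
by apply: ler_wpM2r; [have := B0 l j; rewrite mxE | apply: AA'].
Qed.

Lemma mxle0_mul m n k (A : 'M[R]_(m, n)) (B : 'M[R]_(n, k)) :
  mxle 0 A -> mxle 0 B -> mxle 0 (A *m B).
Proof. by move=> A0 B0; have := mxle_mull A0 B0; rewrite mulmx0. Qed.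

Lemma mxle0_add m n (A B : 'M[R]_(m, n)) : mxle 0 A -> mxle 0 B -> mxle 0 (A + B).
Proof. by move=> A0 B0; have := mxleD A0 B0; rewrite addr0. Qed.

Lemma mxle0_sum m n (I : finType) (P : pred I) (F : I -> 'M[R]_(m, n)) :
  (forall i, mxle 0 (F i)) -> mxle 0 (\sum_(i | P i) F i).
Proof. by move=> F0; have := mxle_sum P F0; rewrite big1. Qed.

Lemma mxleZ m n (s : R) (A B : 'M[R]_(m, n)) :
  0 <= s -> mxle A B -> mxle (s *: A) (s *: B).
Proof. by move=> s0 AB i j; rewrite !mxE ler_wpM2l. Qed.

Lemma mxle0_scale m n (s : R) (A : 'M[R]_(m, n)) :
  0 <= s -> mxle 0 A -> mxle 0 (s *: A).
Proof. by move=> s0 A0; have := mxleZ s0 A0; rewrite scaler0. Qed.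

Lemma mxle0_1 n : mxle 0 (1%:M : 'M[R]_n).
Proof. by move=> i j; rewrite !mxE ler0n. Qed.

Lemma mxle0_const m n : mxle 0 (const_mx 1 : 'M[R]_(m, n)).
Proof. by move=> i j; rewrite !mxE ler01. Qed.

Lemma mxle_addr m n (A B : 'M[R]_(m, n)) : mxle 0 B -> mxle A (A + B).
Proof. by move=> B0; have := mxleD (mxle_refl A) B0; rewrite addr0. Qed.

Lemma mxle_col_mx m1 m2 n (A A' : 'M[R]_(m1, n)) (B B' : 'M[R]_(m2, n)) :
  mxle (col_mx A B) (col_mx A' B') <-> mxle A A' /\ mxle B B'.
Proof.
split=> [AB | [AA' BB'] i j].
  by split=> i j; [have := AB (lshift _ i) j | have := AB (rshift _ i) j];
    rewrite ?col_mxEu ?col_mxEd.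
by case: (split_ordP i) => i' ->; rewrite ?col_mxEu ?col_mxEd.
Qed.

Lemma mxle_block_mx m1 m2 n1 n2 (A A' : 'M[R]_(m1, n1)) (B B' : 'M[R]_(m1, n2))
    (C C' : 'M[R]_(m2, n1)) (D D' : 'M[R]_(m2, n2)) :
  mxle (block_mx A B C D) (block_mx A' B' C' D') <->
  [/\ mxle A A', mxle B B', mxle C C' & mxle D D'].
Proof.
split=> [ABCD | [AA' BB' CC' DD'] i j].
  split=> i j; [have := ABCD (lshift _ i) (lshift _ j)
    | have := ABCD (lshift _ i) (rshift _ j)
    | have := ABCD (rshift _ i) (lshift _ j)
    | have := ABCD (rshift _ i) (rshift _ j)];
  by rewrite ?block_mxEul ?block_mxEur ?block_mxEdl ?block_mxEdr.
case: (split_ordP i) => i' ->; case: (split_ordP j) => j' ->;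
  by rewrite ?block_mxEul ?block_mxEur ?block_mxEdl ?block_mxEdr.
Qed.

Lemma mxle0_block_mx m1 m2 n1 n2 (A : 'M[R]_(m1, n1)) (B : 'M[R]_(m1, n2))
    (C : 'M[R]_(m2, n1)) (D : 'M[R]_(m2, n2)) :
  mxle 0 (block_mx A B C D) <-> [/\ mxle 0 A, mxle 0 B, mxle 0 C & mxle 0 D].
Proof. by rewrite -block_mx0; apply: mxle_block_mx. Qed.

End EntrywiseOrder.

Arguments mxle0_1 {R n}.
Arguments mxle0_const {R m n}.

Section EntrywiseLimits.
Variable R : realFieldType.

Definition mxcvg m n (A_ : nat -> 'M[R]_(m, n)) (A : 'M[R]_(m, n)) :=
  forall i j, (fun N => A_ N i j) @ \oo --> A i j.

Lemma mxcvg_cst m n (A : 'M[R]_(m, n)) : mxcvg (fun=> A) A.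
Proof. by move=> i j; apply: cvg_cst. Qed.

Lemma mxcvgD m n (A_ B_ : nat -> 'M[R]_(m, n)) A B :
  mxcvg A_ A -> mxcvg B_ B -> mxcvg (fun N => A_ N + B_ N) (A + B).
Proof. by move=> cA cB i j; rewrite mxE; under eq_fun do rewrite mxE; apply: cvgD. Qed.

Lemma mxcvgM m n k (A_ : nat -> 'M[R]_(m, n)) (B_ : nat -> 'M[R]_(n, k)) A B :
  mxcvg A_ A -> mxcvg B_ B -> mxcvg (fun N => A_ N *m B_ N) (A *m B).
Proof.
move=> cA cB i j; rewrite mxE; under eq_fun do rewrite mxE.
apply: cvg_big => [|l _]; first exact: add_continuous.
exact: cvgM.
Qed.

Lemma mxcvg_le m n (A_ : nat -> 'M[R]_(m, n)) A B :
  mxcvg A_ A -> (forall N, mxle (A_ N) B) -> mxle A B.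
Proof. by move=> cA AB i j; apply: (cvgr_to_le (cA i j)); apply: nearW => N; apply: AB. Qed.

Lemma mxcvg_ge m n (A_ : nat -> 'M[R]_(m, n)) A B N0 :
  mxcvg A_ A -> (forall N, (N0 <= N)%N -> mxle B (A_ N)) -> mxle B A.
Proof. by move=> cA BA i j; apply: (cvgr_to_ge (cA i j)); exists N0 => // N /BA. Qed.

End EntrywiseLimits.

Arguments mxcvg_cst {R m n} A.

(** * First-passage decomposition of a QBD *)

Lemma subn_pred_succ n (i : 'I_n) : (n - i = (n.-1 - i).+1)%N.
Proof. by case: n i => [[]|n i] //=; rewrite subSn // -ltnS. Qed.

Lemma addrACA3 (V : nmodType) (a b c d e f : V) :
  a + b + (c + d) + (e + f) = a + c + e + (b + d + f).
Proof. by rewrite (addrACA a b) addrACA. Qed.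

Section QBDFirstPassage.
Variables (R : realType) (m : nat) (Lm1 L0 L1 : 'M[R]_m).
Local Notation F := (qbd_taboo Lm1 L0 L1).

Definition qbd_passage n := F n 1 *m Lm1.
Local Notation g := qbd_passage.

Definition qbd_taboo_after_passage n h := \sum_(i < n) g i *m F (n.-1 - i) h.
Local Notation S := qbd_taboo_after_passage.

Definition qbd_passage2 n := \sum_(i < n) g i *m g (n.-1 - i).

Lemma qbd_taboo_height0 n : F n 0 = 0.
Proof. by case: n. Qed.

Lemma qbd_tabooS n h :
  F n.+1 h.+1 = F n h.+2 *m Lm1 + F n h.+1 *m L0 + F n h *m L1.
Proof. by []. Qed.

Lemma qbd_taboo_after_passage_height0 n : S n 0 = 0.
Proof. by rewrite /S big1 // => i _; rewrite qbd_taboo_height0 mulmx0. Qed.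

Lemma qbd_taboo_after_passageS n h :
  S n.+1 h.+1 = (if h == 0%N then g n else 0)
    + S n h.+2 *m Lm1 + S n h.+1 *m L0 + S n h *m L1.
Proof.
rewrite /S big_ord_recr /= subnn addrC -!addrA; congr (_ + _).
  by case: h => [|h] /=; rewrite ?mulmx1 ?mulmx0.
rewrite !mulmx_suml -!big_split /=; apply: eq_bigr => i _.
by rewrite subn_pred_succ qbd_tabooS !mulmxDr !mulmxA addrA.
Qed.

(* [F n h + S n h.+1] is the taboo matrix for a taboo level one step further
   down (paths avoiding the old taboo level, plus those split at their first
   visit to it), so it obeys the last-step recursion of [F]. *)
Lemma qbd_taboo_lowerS n h : F n.+1 h + S n.+1 h.+1 =
  (F n h.+1 + S n h.+2) *m Lm1 + (F n h + S n h.+1) *m L0 + (F n h.-1 + S n h) *m L1.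
Proof.
rewrite qbd_taboo_after_passageS; case: h => [|h] /=.
  by rewrite qbd_taboo_height0 qbd_taboo_after_passage_height0 !add0r mul0mx !addr0
    !mulmxDl.
by rewrite add0r !mulmxDl addrACA3.
Qed.

(* First-step decomposition: after an upward first step the taboo level lies
   two levels below the current one, so [qbd_taboo_lowerS] applies. *)
Lemma qbd_taboo_first_step n h : F n.+1 h = L0 *m F n h + L1 *m (F n h.-1 + S n h).
Proof.
elim: n h => [|n IH] [|h]; rewrite ?qbd_taboo_height0 ?qbd_taboo_after_passage_height0
  ?addr0 ?mulmx0 ?add0r //.
  rewrite qbd_tabooS /S big_ord0 addr0 /=.
  by case: h => [|[|h]] /=; rewrite ?mul1mx ?mulmx1 ?mul0mx ?mulmx0 ?add0r ?addr0.
rewrite [F n.+1 h.+1 in RHS]qbd_tabooS qbd_taboo_lowerS qbd_tabooS !IH /=.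
by rewrite !mulmxDr !mulmxDl !mulmxDr !mulmxA addrACA3.
Qed.

Lemma qbd_passage0 : g 0 = Lm1.
Proof. by rewrite /g mul1mx. Qed.

Lemma qbd_passageS n : g n.+1 = L0 *m g n + L1 *m qbd_passage2 n.
Proof.
rewrite /g qbd_taboo_first_step /= qbd_taboo_height0 add0r mulmxDl -!mulmxA.
by congr (_ + _ *m _); rewrite /S mulmx_suml; apply: eq_bigr => i _; rewrite mulmxA.
Qed.

End QBDFirstPassage.

(** * The G-matrix as minimal nonnegative solution *)

Definition substochastic_qbd (R : numDomainType) m (Lm1 L0 L1 : 'M[R]_m) :=
  [/\ mxle 0 Lm1, mxle 0 L0, mxle 0 L1 &
      mxle ((Lm1 + L0 + L1) *m const_mx 1) (const_mx 1 : 'cV[R]_m)].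

Definition qbd_map (R : pzRingType) m (Lm1 L0 L1 Y : 'M[R]_m) :=
  Lm1 + L0 *m Y + L1 *m (Y *m Y).

Section QBDGMatrix.
Variables (R : realType) (m : nat) (Lm1 L0 L1 : 'M[R]_m).
Hypothesis hL : substochastic_qbd Lm1 L0 L1.
Local Notation g := (qbd_passage Lm1 L0 L1).
Local Notation g2 := (qbd_passage2 Lm1 L0 L1).
Local Notation G := (qbd_G Lm1 L0 L1).
Local Notation ones := (const_mx 1 : 'cV[R]_m).

Let Lm1_ge0 : mxle 0 Lm1. Proof. by case: hL. Qed.
Let L0_ge0 : mxle 0 L0. Proof. by case: hL. Qed.
Let L1_ge0 : mxle 0 L1. Proof. by case: hL. Qed.

Lemma qbd_taboo_ge0 n h : mxle 0 (qbd_taboo Lm1 L0 L1 n h).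
Proof.
elim: n h => [|n IH] [|h]; rewrite ?qbd_taboo_height0; try exact: mxle_refl.
  by rewrite /=; case: (h == 0%N); [exact: mxle0_1 | exact: mxle_refl].
by rewrite qbd_tabooS; do 2?apply: mxle0_add; apply: mxle0_mul.
Qed.

Lemma qbd_passage_ge0 n : mxle 0 (g n).
Proof. exact: mxle0_mul (qbd_taboo_ge0 _ _) Lm1_ge0. Qed.

Definition qbd_G_part N := \sum_(n < N) g n.
Definition qbd_G2_part N := \sum_(n < N) g2 n.
Local Notation GN := qbd_G_part.
Local Notation G2N := qbd_G2_part.

Lemma qbd_G_part0 : GN 0 = 0.
Proof. by rewrite /GN big_ord0. Qed.

Lemma qbd_G_partS N : GN N.+1 = Lm1 + L0 *m GN N + L1 *m G2N N.
Proof.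
rewrite /GN big_ord_recl qbd_passage0 -addrA; congr (_ + _).
under eq_bigr do rewrite lift0 qbd_passageS.
by rewrite big_split /= -!mulmx_sumr.
Qed.

Lemma qbd_G_part_recr N : GN N.+1 = GN N + g N.
Proof. by rewrite /GN big_ord_recr. Qed.

Lemma qbd_G_part_ge0 N : mxle 0 (GN N).
Proof. by apply: mxle0_sum => n; apply: qbd_passage_ge0. Qed.

Lemma qbd_G_part_mono M N : (M <= N)%N -> mxle (GN M) (GN N).
Proof.
move=> /subnKC <-; elim: (N - M)%N => [|k IH]; first by rewrite addn0; apply: mxle_refl.
by rewrite addnS qbd_G_part_recr; apply: mxle_trans IH (mxle_addr _ (qbd_passage_ge0 _)).
Qed.

Lemma qbd_G2_part_conv N : G2N N = \sum_(n < N) g n *m GN (N.-1 - n).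
Proof.
elim: N => [|N IH]; first by rewrite /G2N !big_ord0.
rewrite /G2N big_ord_recr /= -/(G2N N) IH [in RHS]big_ord_recr /= subnn.
rewrite qbd_G_part0 mulmx0 addr0 /qbd_passage2 -big_split /=.
by apply: eq_bigr => n _; rewrite -mulmxDr subn_pred_succ qbd_G_part_recr.
Qed.

Lemma qbd_G2_part_le N : mxle (G2N N) (GN N *m GN N).
Proof.
rewrite qbd_G2_part_conv {2}/GN mulmx_suml; apply: mxle_sum => n.
apply: mxle_mull (qbd_passage_ge0 n) (qbd_G_part_mono _).
exact: leq_trans (leq_subr _ _) (leq_pred _).
Qed.

Lemma qbd_G2_part_ge N : mxle (GN N *m GN N) (G2N (N + N)).
Proof.
rewrite qbd_G2_part_conv big_split_ord /= {1}/GN mulmx_suml.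
apply: mxle_trans (mxle_addr _ _); last first.
  by apply: mxle0_sum => n; apply: mxle0_mul (qbd_passage_ge0 _) (qbd_G_part_ge0 _).
apply: mxle_sum => n; apply: mxle_mull (qbd_passage_ge0 _) (qbd_G_part_mono _) => /=.
by have := ltn_ord n; lia.
Qed.

Lemma qbd_G_part_super_le (Y : 'M[R]_m) :
  mxle 0 Y -> mxle (qbd_map Lm1 L0 L1 Y) Y -> forall N, mxle (GN N) Y.
Proof.
move=> Y_ge0 Y_super; elim=> [|N IH]; first by rewrite qbd_G_part0.
apply: mxle_trans Y_super; rewrite qbd_G_partS; apply: mxleD.
  exact: mxleD (mxle_refl _) (mxle_mull L0_ge0 IH).
apply: mxle_mull L1_ge0 (mxle_trans (qbd_G2_part_le N) _).
exact: mxle_trans (mxle_mull (qbd_G_part_ge0 N) IH) (mxle_mulr Y_ge0 IH).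
Qed.

Lemma qbd_G_part_rows N : mxle (GN N *m ones) ones.
Proof.
case: hL => _ _ _ L_sub.
elim: N => [|N IH]; first by rewrite qbd_G_part0 mul0mx; apply: mxle0_const.
apply: mxle_trans L_sub; rewrite qbd_G_partS !mulmxDl -!mulmxA.
apply: mxleD; first exact: mxleD (mxle_refl _) (mxle_mull L0_ge0 IH).
apply: (mxle_mull L1_ge0); apply: mxle_trans (mxle_mulr mxle0_const (qbd_G2_part_le N)) _.
by rewrite -mulmxA; apply: mxle_trans (mxle_mull (qbd_G_part_ge0 N) IH) IH.
Qed.

Lemma qbd_G_part_le1 N i j : GN N i j <= 1.
Proof.
have := qbd_G_part_rows N i 0; rewrite !mxE; apply: le_trans.
rewrite (bigD1 j) //= !mxE mulr1 lerDl; apply: sumr_ge0 => k _.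
by rewrite mxE mulr1; have := qbd_G_part_ge0 N i k; rewrite mxE.
Qed.

Lemma qbd_G_part_cvg : mxcvg GN G.
Proof.
move=> i j; rewrite /qbd_G mxE.
have -> : series (fun n => (qbd_taboo Lm1 L0 L1 n 1 *m Lm1) i j) = (fun N => GN N i j).
  by apply: funext => N; rewrite /series /= /GN summxE big_mkord.
apply: nondecreasing_is_cvgn; first by move=> M N /qbd_G_part_mono; apply.
by exists 1 => _ [N _ <-]; apply: qbd_G_part_le1.
Qed.

Lemma qbd_G_ge_part N : mxle (GN N) G.
Proof. by apply: (mxcvg_ge qbd_G_part_cvg) => M; apply: qbd_G_part_mono. Qed.

Lemma qbd_G_ge0 : mxle 0 G.
Proof. by have := qbd_G_ge_part 0; rewrite qbd_G_part0. Qed.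

Lemma qbd_G_min (Y : 'M[R]_m) :
  mxle 0 Y -> mxle (qbd_map Lm1 L0 L1 Y) Y -> mxle G Y.
Proof. by move=> Y_ge0 Y_super; apply: (mxcvg_le qbd_G_part_cvg); apply: qbd_G_part_super_le. Qed.

Lemma qbd_G_rows : mxle (G *m ones) ones.
Proof.
apply: (mxcvg_le (mxcvgM qbd_G_part_cvg (mxcvg_cst ones))).
exact: qbd_G_part_rows.
Qed.

Lemma qbd_G_fix : qbd_map Lm1 L0 L1 G = G.
Proof.
apply: mxle_anti.
  have map_cvg : mxcvg (fun N => qbd_map Lm1 L0 L1 (GN N)) (qbd_map Lm1 L0 L1 G).
    apply: mxcvgD; first exact: mxcvgD (mxcvg_cst _) (mxcvgM (mxcvg_cst _) qbd_G_part_cvg).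
    exact: mxcvgM (mxcvg_cst _) (mxcvgM qbd_G_part_cvg qbd_G_part_cvg).
  apply: (mxcvg_le map_cvg) => N; apply: mxle_trans (qbd_G_ge_part (N + N).+1).
  rewrite qbd_G_partS /qbd_map; apply: mxleD (mxle_mull L1_ge0 (qbd_G2_part_ge N)).
  by apply: mxleD (mxle_refl _) (mxle_mull L0_ge0 (qbd_G_part_mono _)); rewrite leq_addl.
apply: (mxcvg_le qbd_G_part_cvg) => N.
apply: mxle_trans (qbd_G_part_mono (leqnSn N)) _.
rewrite qbd_G_partS /qbd_map; apply: mxleD.
  exact: mxleD (mxle_refl _) (mxle_mull L0_ge0 (qbd_G_ge_part N)).
apply: mxle_mull L1_ge0 (mxle_trans (qbd_G2_part_le N) _).
exact: mxle_trans (mxle_mull (qbd_G_part_ge0 N) (qbd_G_ge_part N))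
  (mxle_mulr qbd_G_ge0 (qbd_G_ge_part N)).
Qed.

End QBDGMatrix.

Lemma qbd_G_zero_left (R : realType) p q (X : 'M[R]_q) (L0 L1 : 'M[R]_(p + q)) :
  exists a b, qbd_G (block_mx 0 0 0 X) L0 L1 = block_mx 0 a 0 b.
Proof.
set G := qbd_G _ _ _; exists (ursubmx G), (drsubmx G).
suff [ul0 dl0] : ulsubmx G = 0 /\ dlsubmx G = 0 by rewrite -{1}(submxK G) ul0 dl0.
suff G_left0 j i : G i (lshift q j) = 0.
  by split; apply/matrixP => i j; rewrite 2![LHS]mxE [RHS]mxE G_left0.
rewrite /G /qbd_G mxE (_ : series _ = fun=> 0) ?lim_cst //.
apply: funext => N; rewrite /series /= big1 // => n _; rewrite mxE big1 // => k _.
by case: (split_ordP k) => k' ->; rewrite ?block_mxEul ?block_mxEdl mxE mulr0.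
Qed.

(** * The three QBDs of the fluid queue *)

Section FluidQueueQBDs.
Variables (R : realType) (p q : nat) (T : 'M[R]_(p + q)) (Psi : 'M[R]_(p, q)) (lam : R).
Hypotheses (hT : is_generator T) (hPsi : is_min_nonneg_riccati_sol T Psi)
  (lam_gt0 : 0 < lam) (lam_ge_diag : forall i, `|T i i| <= lam).

Local Notation P := (1%:M + lam^-1 *: T).
Local Notation Pul := (ulsubmx P).
Local Notation Pur := (ursubmx P).
Local Notation Pdl := (dlsubmx P).
Local Notation Pdr := (drsubmx P).
Local Notation ones n := (const_mx 1 : 'cV[R]_n).

Lemma P_ge0 : mxle 0 P.
Proof.
move=> i j; rewrite !mxE; case: (eqVneq i j) => [<-|ij] /=.
  have := lam_ge_diag i; rewrite ler_norml => /andP[lam_le _].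
  have : lam^-1 * - lam <= lam^-1 * T i i by apply: ler_wpM2l => //; rewrite invr_ge0 ltW.
  by rewrite mulrN mulVf ?gt_eqF // => Tii_ge; lra.
by rewrite add0r; apply: mulr_ge0; [rewrite invr_ge0 ltW | apply: hT.1].
Qed.

Lemma P_blocks_ge0 : [/\ mxle 0 Pul, mxle 0 Pur, mxle 0 Pdl & mxle 0 Pdr].
Proof. by rewrite -mxle0_block_mx submxK; apply: P_ge0. Qed.

Lemma P_block_rows :
  Pul *m ones p + Pur *m ones q = ones p /\ Pdl *m ones p + Pdr *m ones q = ones q.
Proof.
apply/eq_col_mx; rewrite -mul_block_col col_mx_const submxK mulmxDl mul1mx -scalemxAl.
suff -> : T *m ones (p + q) = 0 by rewrite scaler0 addr0.
by apply/matrixP => i j; rewrite !mxE -[RHS](hT.2 i); apply: eq_bigr => k _; rewrite mxE mulr1.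
Qed.

Lemma P_blockE :
  P = block_mx (1%:M + lam^-1 *: ulsubmx T) (lam^-1 *: ursubmx T)
               (lam^-1 *: dlsubmx T) (1%:M + lam^-1 *: drsubmx T).
Proof.
by rewrite (scalar_mx_block p q 1) -{1}(submxK T) scale_block_mx add_block_mx !add0r.
Qed.

(* [W Psi] is the matrix [I - lam^-1 U] of the statement. *)
Definition W (a : 'M[R]_(p, q)) : 'M[R]_q :=
  1%:M - lam^-1 *: (drsubmx T + dlsubmx T *m a).

Definition up_map (a : 'M[R]_(p, q)) (b : 'M[R]_q) := Pur *m b + Pul *m (a *m b).

Definition down_map (a : 'M[R]_(p, q)) (b : 'M[R]_q) :=
  2^-1 *: (1%:M + Pdr *m b + Pdl *m (a *m b)).

Lemma down_mapE a b : down_map a b = b + 2^-1 *: (1%:M - W a *m b).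
Proof.
rewrite /down_map /W P_blockE block_mxKdr block_mxKdl mulmxBl mul1mx mulmxDl.
rewrite mul1mx -!scalemxAl mulmxDl mulmxA.
by apply/matrixP => i j; rewrite !mxE; lra.
Qed.

Lemma down_fixP a b : down_map a b = b <-> W a *m b = 1%:M.
Proof.
rewrite down_mapE; split=> [fix_b | ->]; last by rewrite subrr scaler0 addr0.
have /eqP : 2^-1 *: (1%:M - W a *m b) = 0 by apply: (addrI b); rewrite addr0.
by rewrite scaler_eq0 invr_eq0 pnatr_eq0 subr_eq0 eq_sym => /eqP.
Qed.

Lemma riccatiP a : riccati T a <-> a *m W a = Pur + Pul *m a.
Proof.
have -> : a *m W a = Pur + Pul *m a - lam^-1 *:
    (ursubmx T + a *m drsubmx T + ulsubmx T *m a + a *m dlsubmx T *m a).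
  rewrite /W P_blockE block_mxKur block_mxKul mulmxBr mulmx1 mulmxDl mul1mx.
  rewrite -scalemxAr mulmxDr (mulmxA a) -scalemxAl.
  by apply/matrixP => i j; rewrite !mxE; lra.
rewrite /riccati; split=> [-> | aW]; first by rewrite scaler0 subr0.
have /eqP : lam^-1 *: (ursubmx T + a *m drsubmx T + ulsubmx T *m a
    + a *m dlsubmx T *m a) = 0.
  by apply/oppr_inj/(addrI (Pur + Pul *m a)); rewrite oppr0 addr0.
by rewrite scaler_eq0 invr_eq0 gt_eqF //= => /eqP.
Qed.

Lemma up_fix_riccati a b : W a *m b = 1%:M -> up_map a b = a <-> riccati T a.
Proof.
move=> Wb; have bW := mulmx1C Wb.
rewrite riccatiP (_ : up_map a b = (Pur + Pul *m a) *m b); last first.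
  by rewrite /up_map mulmxDl mulmxA.
split=> [up_a | aW]; first by rewrite -{1}up_a -mulmxA bW mulmx1.
by rewrite -aW -mulmxA Wb mulmx1.
Qed.

Lemma fluid_fix_riccati a b : up_map a b = a -> down_map a b = b -> riccati T a.
Proof. by move=> up_a /down_fixP Wb; apply/(up_fix_riccati Wb). Qed.

Local Notation Lhalf := (block_mx 0 0 0 (2^-1)%:M : 'M[R]_(p + q)).
Local Notation D0 := (block_mx 0 Pur 0 (2^-1 *: Pdr)).
Local Notation D1 := (block_mx Pul 0 (2^-1 *: Pdl) 0).
Local Notation B0 := (2^-1 *: block_mx 1%:M Pur 0 Pdr).
Local Notation B1 := (2^-1 *: block_mx Pul 0 Pdl 0).
Local Notation A0 := (block_mx 0 Pur 0 0).
Local Notation A1 := (block_mx Pul 0 0 0).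

Ltac qbd_map_block_simpl := rewrite /qbd_map /up_map /down_map ?scale_block_mx !mulmx_block
  ?(mul0mx, mulmx0, add0r, addr0, mul1mx, mulmx1, scaler0)
  -?scalemxAl ?add_block_mx ?(mul0mx, mulmx0, add0r, addr0, scaler0)
  ?mul1mx ?scalerDr ?scalemx1 ?addrA.

Lemma qbd_map_i a b : qbd_map Lhalf D0 D1 (block_mx 0 a 0 b) =
  block_mx 0 (up_map a b) 0 (down_map a b).
Proof. by qbd_map_block_simpl. Qed.

Lemma qbd_map_ii a b : qbd_map Lhalf B0 B1 (block_mx 0 a 0 b) =
  block_mx 0 (2^-1 *: (a + up_map a b)) 0 (down_map a b).
Proof. by qbd_map_block_simpl. Qed.

Lemma qbd_map_iii X a b : qbd_map (block_mx 0 0 0 X) A0 A1 (block_mx 0 a 0 b) =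
  block_mx 0 (up_map a b) 0 X.
Proof. by qbd_map_block_simpl. Qed.

Lemma qbd_i_fixP a b :
  qbd_map Lhalf D0 D1 (block_mx 0 a 0 b) = block_mx 0 a 0 b <->
  up_map a b = a /\ down_map a b = b.
Proof. by rewrite qbd_map_i; split=> [/eq_block_mx[_ -> _ ->] | [-> ->]]. Qed.

Lemma qbd_ii_fixP a b :
  qbd_map Lhalf B0 B1 (block_mx 0 a 0 b) = block_mx 0 a 0 b <->
  up_map a b = a /\ down_map a b = b.
Proof.
rewrite qbd_map_ii; split=> [/eq_block_mx[_ /matrixP up_a _ ->] | [up_a ->]].
  by split=> //; apply/matrixP => i j; move: (up_a i j); rewrite !mxE; lra.
by rewrite up_a; congr block_mx; apply/matrixP => i j; rewrite !mxE; lra.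
Qed.

Lemma half_ge0 : 0 <= 2^-1 :> R.
Proof. by rewrite invr_ge0 ler0n. Qed.

Lemma mxle0_half_scalar n : mxle 0 ((2^-1)%:M : 'M[R]_n).
Proof. by rewrite -scalemx1; apply: mxle0_scale half_ge0 mxle0_1. Qed.

Lemma block_mx_rows_le (A : 'M[R]_p) (B : 'M[R]_(p, q)) (C : 'M[R]_(q, p)) (D : 'M[R]_q) :
  mxle (block_mx A B C D *m ones (p + q)) (ones (p + q)) <->
  mxle (A *m ones p + B *m ones q) (ones p) /\ mxle (C *m ones p + D *m ones q) (ones q).
Proof. by rewrite -[ones (p + q)]col_mx_const mul_block_col mxle_col_mx. Qed.

Ltac mxle0_blocks := have [? ? ? ?] := P_blocks_ge0;
  repeat first [ apply: mxle0_scale half_ge0 _ | apply/mxle0_block_mx; split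
               | exact: mxle_refl | exact: mxle0_1 | exact: mxle0_half_scalar | assumption ].

Ltac block_rows_lra :=
  let ru := fresh "ru" in let rd := fresh "rd" in
  let i := fresh "i" in let j := fresh "j" in
  rewrite block_mx_rows_le ?mulmxDl -?scalemxAl ?mul_scalar_mx ?mul1mx ?mul0mx ?addr0 ?add0r;
  move: P_block_rows;
  move: (Pul *m ones p) (Pur *m ones q) (Pdl *m ones p) (Pdr *m ones q) => ? ? ? ?;
  case=> /matrixP ru /matrixP rd;
  split=> i j; [move: (ru i j) | move: (rd i j)]; rewrite !mxE; lra.

Lemma qbd_i_substochastic : substochastic_qbd Lhalf D0 D1.
Proof. by split; [mxle0_blocks .. | rewrite !add_block_mx; block_rows_lra]. Qed.

Lemma qbd_ii_substochastic : substochastic_qbd Lhalf B0 B1.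
Proof.
by split; [mxle0_blocks .. | rewrite !scale_block_mx !add_block_mx; block_rows_lra].
Qed.

Lemma qbd_iii_substochastic X :
  mxle 0 X -> mxle (X *m ones q) (ones q) -> substochastic_qbd (block_mx 0 0 0 X) A0 A1.
Proof.
move=> X_ge0 X_rows; split; [mxle0_blocks .. |].
rewrite !add_block_mx !addr0 !add0r block_mx_rows_le mul0mx add0r P_block_rows.1.
by split=> //; apply: mxle_refl.
Qed.

Lemma Psi_ge0 : mxle 0 Psi.
Proof. by case: hPsi => Psi_ge0 _ _ i j; rewrite mxE. Qed.

Lemma Psi_le_riccati a : mxle 0 a -> riccati T a -> mxle Psi a.
Proof.
case: hPsi => _ _ Psi_min a_ge0 ric_a i j; apply: Psi_min ric_a i j => k l.
by have := a_ge0 k l; rewrite mxE.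
Qed.

Lemma qbd_G_fluid_fix X L0 L1 : substochastic_qbd (block_mx 0 0 0 X) L0 L1 ->
  (forall a b, qbd_map (block_mx 0 0 0 X) L0 L1 (block_mx 0 a 0 b) = block_mx 0 a 0 b
               <-> up_map a b = a /\ down_map a b = b) ->
  exists a b, [/\ qbd_G (block_mx 0 0 0 X) L0 L1 = block_mx 0 a 0 b, mxle 0 a,
                  up_map a b = a & down_map a b = b].
Proof.
move=> hL fixP; have [a [b G_E]] := qbd_G_zero_left X L0 L1.
have [up_a down_b] : up_map a b = a /\ down_map a b = b by rewrite -fixP -G_E qbd_G_fix.
have := qbd_G_ge0 hL; rewrite G_E mxle0_block_mx => -[_ a_ge0 _ _].
by exists a, b.
Qed.

Lemma Psi_rows : mxle (Psi *m ones q) (ones p).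
Proof.
have [a [b [G_E a_ge0 up_a down_b]]] := qbd_G_fluid_fix qbd_i_substochastic qbd_i_fixP.
have Psi_le_a := Psi_le_riccati a_ge0 (fluid_fix_riccati up_a down_b).
have := qbd_G_rows qbd_i_substochastic.
rewrite G_E -[ones (p + q)]col_mx_const mul_block_col !mul0mx !add0r mxle_col_mx.
by case=> a_rows _; apply: mxle_trans (mxle_mulr mxle0_const Psi_le_a) a_rows.
Qed.

Lemma small_qbd_substochastic :
  substochastic_qbd (2^-1)%:M (2^-1 *: (Pdr + Pdl *m Psi)) 0.
Proof.
have [_ _ Pdl_ge0 Pdr_ge0] := P_blocks_ge0.
split; [exact: mxle0_half_scalar | | exact: mxle_refl |].
  exact/(mxle0_scale half_ge0)/mxle0_add/(mxle0_mul Pdl_ge0 Psi_ge0).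
have := mxle_mull Pdl_ge0 Psi_rows; have := P_block_rows.2.
rewrite addr0 mulmxDl mul_scalar_mx -scalemxAl mulmxDl -mulmxA.
move: (Pdl *m ones p) (Pdr *m ones q) (Pdl *m (Psi *m ones q)) => u v w /matrixP uv wu i j.
by move: (uv i j) (wu i j); rewrite !mxE; lra.
Qed.

Definition Z := qbd_G (2^-1)%:M (2^-1 *: (Pdr + Pdl *m Psi)) 0.

Lemma Z_ge0 : mxle 0 Z.
Proof. exact: qbd_G_ge0 small_qbd_substochastic. Qed.

Lemma Z_rows : mxle (Z *m ones q) (ones q).
Proof. exact: qbd_G_rows small_qbd_substochastic. Qed.

Lemma down_Psi_Z : down_map Psi Z = Z.
Proof.
rewrite -[RHS](qbd_G_fix small_qbd_substochastic) /qbd_map /down_map -/Z.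
by rewrite mul0mx addr0 -scalemxAl mulmxDl mulmxA -[(2^-1)%:M]scalemx1 -scalerDr addrA.
Qed.

Lemma W_Psi_Z : W Psi *m Z = 1%:M.
Proof. exact/down_fixP/down_Psi_Z. Qed.

Lemma up_Psi_Z : up_map Psi Z = Psi.
Proof. by case: hPsi => _ ric_Psi _; apply/(up_fix_riccati W_Psi_Z). Qed.

Local Notation Ystar := (block_mx 0 Psi 0 Z : 'M[R]_(p + q)).

Lemma Ystar_ge0 : mxle 0 Ystar.
Proof.
apply/mxle0_block_mx; split; [apply: mxle_refl | apply: Psi_ge0 | apply: mxle_refl |].
exact: Z_ge0.
Qed.

Lemma fluid_fix_eq a b : mxle 0 a -> mxle a Psi ->
  up_map a b = a -> down_map a b = b -> a = Psi /\ b = Z.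
Proof.
move=> a_ge0 a_le up_a down_b.
have a_Psi : a = Psi.
  exact: mxle_anti a_le (Psi_le_riccati a_ge0 (fluid_fix_riccati up_a down_b)).
split=> //; move/down_fixP: down_b; rewrite a_Psi => Wb.
by rewrite -[b]mul1mx -(mulmx1C W_Psi_Z) -mulmxA Wb mulmx1.
Qed.

Lemma qbd_G_fluid X L0 L1 : substochastic_qbd (block_mx 0 0 0 X) L0 L1 ->
  (forall a b, qbd_map (block_mx 0 0 0 X) L0 L1 (block_mx 0 a 0 b) = block_mx 0 a 0 b
               <-> up_map a b = a /\ down_map a b = b) ->
  qbd_G (block_mx 0 0 0 X) L0 L1 = Ystar.
Proof.
move=> hL fixP; have [a [b [G_E a_ge0 up_a down_b]]] := qbd_G_fluid_fix hL fixP.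
have Ystar_super : mxle (qbd_map (block_mx 0 0 0 X) L0 L1 Ystar) Ystar.
  by rewrite (fixP _ _).2 ?up_Psi_Z ?down_Psi_Z //; apply: mxle_refl.
have := qbd_G_min hL Ystar_ge0 Ystar_super.
rewrite G_E mxle_block_mx => -[_ a_le _ _].
by have [-> ->] := fluid_fix_eq a_ge0 a_le up_a down_b.
Qed.

Lemma qbd_G_i : qbd_G Lhalf D0 D1 = Ystar.
Proof. exact: qbd_G_fluid qbd_i_substochastic qbd_i_fixP. Qed.

Lemma qbd_G_ii : qbd_G Lhalf B0 B1 = Ystar.
Proof. exact: qbd_G_fluid qbd_ii_substochastic qbd_ii_fixP. Qed.

Lemma invmx_W_Psi : invmx (W Psi) = Z.
Proof.
have [W_unit _] := mulmx1_unit W_Psi_Z.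
by rewrite -[RHS](mulKmx W_unit) W_Psi_Z mulmx1.
Qed.

Lemma down_map_le a a' b : mxle 0 b -> mxle a a' -> mxle (down_map a b) (down_map a' b).
Proof.
have [_ _ Pdl_ge0 _] := P_blocks_ge0; move=> b_ge0 a_le.
exact/(mxleZ half_ge0)/mxleD/(mxle_mull Pdl_ge0 (mxle_mulr b_ge0 a_le))/mxle_refl.
Qed.

Lemma qbd_G_iii : qbd_G (block_mx 0 0 0 Z) A0 A1 = Ystar.
Proof.
have hL := qbd_iii_substochastic Z_ge0 Z_rows.
have [a [b G_E]] := qbd_G_zero_left Z A0 A1.
have := qbd_G_fix hL; rewrite G_E qbd_map_iii => /eq_block_mx[_ up_a _ bZ].
rewrite -{}bZ in G_E up_a *.
have := qbd_G_ge0 hL; rewrite G_E mxle0_block_mx => -[_ a_ge0 _ _].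
have Ystar_super : mxle (qbd_map (block_mx 0 0 0 Z) A0 A1 Ystar) Ystar.
  by rewrite qbd_map_iii up_Psi_Z; apply: mxle_refl.
have := qbd_G_min hL Ystar_ge0 Ystar_super; rewrite G_E mxle_block_mx => -[_ a_le _ _].
have Y_super : mxle (qbd_map Lhalf D0 D1 (block_mx 0 a 0 Z)) (block_mx 0 a 0 Z).
  rewrite qbd_map_i up_a; apply/mxle_block_mx; split; try exact: mxle_refl.
  by rewrite -[X in mxle _ X]down_Psi_Z; apply: down_map_le Z_ge0 a_le.
have Y_ge0 : mxle 0 (block_mx 0 a 0 Z : 'M[R]_(p + q)).
  by apply/mxle0_block_mx; split; [apply: mxle_refl | | apply: mxle_refl | apply: Z_ge0].
have := qbd_G_min qbd_i_substochastic Y_ge0 Y_super.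
rewrite qbd_G_i mxle_block_mx => -[_ Psi_le_a _ _].
by rewrite (mxle_anti a_le Psi_le_a).
Qed.

End FluidQueueQBDs.

Theorem theorem3 (R : realType) (p q : nat) (hp : (0 < p)%N) (hq : (0 < q)%N)
  (T : 'M[R]_(p + q)) (hT : is_generator T)
  (Psi : 'M[R]_(p, q)) (hPsi : is_min_nonneg_riccati_sol T Psi)
  (lam : R) (hlam0 : 0 < lam) (hlam : forall i, `|T i i| <= lam) :
  let U := drsubmx T + dlsubmx T *m Psi in
  let P := 1%:M + lam^-1 *: T in
  let Delta_m1 : 'M[R]_(p + q) := 2^-1 *: block_mx 0 0 0 1%:M in
  let Delta_0 : 'M[R]_(p + q) :=
    block_mx 0 (ursubmx P) 0 (2^-1 *: drsubmx P) in
  let Delta_1 : 'M[R]_(p + q) :=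
    block_mx (ulsubmx P) 0 (2^-1 *: dlsubmx P) 0 in
  let A'_m1 : 'M[R]_(p + q) := 2^-1 *: block_mx 0 0 0 1%:M in
  let A'_0 : 'M[R]_(p + q) := 2^-1 *: block_mx 1%:M (ursubmx P) 0 (drsubmx P) in
  let A'_1 : 'M[R]_(p + q) := 2^-1 *: block_mx (ulsubmx P) 0 (dlsubmx P) 0 in
  let A_m1 : 'M[R]_(p + q) :=
    block_mx 0 0 0 (invmx (1%:M - lam^-1 *: U)) in
  let A_0 : 'M[R]_(p + q) := block_mx 0 (ursubmx P) 0 0 in
  let A_1 : 'M[R]_(p + q) := block_mx (ulsubmx P) 0 0 0 in
  qbd_G A'_m1 A'_0 A'_1 = qbd_G Delta_m1 Delta_0 Delta_1 /\
  qbd_G A'_m1 A'_0 A'_1 = qbd_G A_m1 A_0 A_1.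
Proof.
move=> U P Dm1 D0 D1 A'm1 A'0 A'1 Am1 A0 A1.
have half_blockE : 2^-1 *: block_mx 0 0 0 1%:M = block_mx 0 0 0 (2^-1)%:M :> 'M[R]_(p + q).
  by rewrite scale_block_mx !scaler0 scalemx1.
rewrite /A'm1 /Dm1 /Am1 half_blockE (invmx_W_Psi hT hPsi hlam0 hlam).
rewrite (qbd_G_ii hT hPsi hlam0 hlam) (qbd_G_i hT hPsi hlam0 hlam).
by rewrite (qbd_G_iii hT hPsi hlam0 hlam).
Qed.
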